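(* Let $G$ be an ordered abelian group, $\beta_0,\beta_1,\beta_{0,1}\in G$, and for $e=0,1$ let $(\gamma_{e,j})_{j<\lambda_e}$ ($\lambda_e$ a limit ordinal) be a well-ordered, monotone increasing family of elements $\ge0$ of $G$ without last element. Put $P_{0,j_0}=\beta_0+\gamma_{0,j_0}$, $P_{1,j_1}=\beta_1+\gamma_{1,j_1}$ and $P_{0,1,j_0,j_1}=\beta_{0,1}+\gamma_{0,j_0}+\gamma_{1,j_1}$. Then there exist ordinals $\rho_0<\lambda_0$, $\rho_1<\lambda_1$, a subset $A\subset[1,\lambda_0)$ and a map $\sigma:A\to[1,\lambda_1)$ such that $P_{0,j_0}$, $P_{1,j_1}$, $P_{0,1,j_0,j_1}$ are pairwise different for all $\rho_0<j_0<\lambda_0$, $\rho_1<j_1<\lambda_1$ with $j_1\neq\sigma(j_0)$ whenever $j_0\in A$. In particular, for all ordinals $\nu_0<\lambda_0$, $\nu_1<\lambda_1$ there exist $\nu_0<j_0<\lambda_0$, $\nu_1<j_1<\lambda_1$ such that $P_{0,j_0}$, $P_{1,j_1}$, $P_{0,1,j_0,j_1}$ are pairwise different. *)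

From HB Require Import structures.
From mathcomp Require Import all_boot all_order all_algebra.
Set Implicit Arguments. Unset Strict Implicit. Unset Printing Implicit Defensive.
Import Order.TTheory GRing.Theory Num.Theory.

Definition ordered_abelian_group (G : porderZmodType) : Prop :=
  (forall x y : G, ((x <= y) || (y <= x))%R) /\
  (forall x y z : G, (x <= y)%R -> (x + z <= y + z)%R).

(* The index set [0, lambda) of a limit ordinal lambda, represented (up to
   order isomorphism) by a totally ordered type I which is well-ordered,
   nonempty and has no last element. *)
Definition limit_ordinal_type (d : Order.disp_t) (I : orderType d) : Prop :=
  well_founded (fun x y : I => (x < y)%O) /\
  inhabited I /\
  (forall j : I, exists k : I, (j < k)%O).

(* j lies in [1, lambda), i.e. j is not the least element 0. *)
Definition pos_index (d : Order.disp_t) (I : orderType d) (j : I) : Prop :=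
  exists i : I, (i < j)%O.

Definition pairwise_distinct3 (G : Type) (x y z : G) : Prop :=
  x <> y /\ x <> z /\ y <> z.

From HB Require Import structures.
From mathcomp Require Import all_boot all_order all_algebra.
Import Order.TTheory GRing.Theory Num.Theory.
From Stdlib Require Import ClassicalEpsilon.

(* [P0 j0 = P01 j0 j1] and
   [P1 j1 = P01 j0 j1] each fix the value of [gamma1 j1], resp. [gamma0 j0],
   so they hold for at most one index [rho1], resp. [rho0]; for fixed [j0],
   [P0 j0 = P1 j1] holds for at most one [j1 = sigma j0].  All three indices
   are read off left inverses of gamma0 and gamma1. *)

Lemma inj_left_inverse {T U : Type} (f : T -> U) :
  inhabited T -> injective f -> exists g : U -> T, cancel f g.
Proof.
move=> inhT f_inj.
exists (fun y => epsilon inhT (fun x => f x = y)) => x.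
by apply: f_inj; apply: (epsilon_spec inhT (fun x' => f x' = f x)); exists x.
Qed.

Lemma can_gt_neq {d : Order.disp_t} {T : porderType d} {U : Type}
    (f : T -> U) (g : U -> T) (y : U) (x : T) :
  cancel f g -> (g y < x)%O -> f x <> y.
Proof. by move=> fK + fx_y; rewrite -fx_y fK ltxx. Qed.

Lemma exists_gt_neq {d : Order.disp_t} {T : orderType d} (a s : T) :
  (forall x : T, exists y : T, (x < y)%O) -> exists x : T, (a < x)%O /\ x <> s.
Proof.
move=> no_max; have [y a_y] := no_max a; have [z y_z] := no_max y.
case: (eqVneq y s) => [y_s | /eqP y_s]; last by exists y.
exists z; split; first exact: lt_trans y_z.
by move=> z_s; move: y_z; rewrite z_s y_s ltxx.
Qed.

Lemma distinct3_addr {V : zmodType} (b0 b1 b01 x0 x1 : V) :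
  (x1 <> b0 + x0 - b1 -> x1 <> b0 - b01 -> x0 <> b1 - b01 ->
  pairwise_distinct3 (b0 + x0) (b1 + x1) (b01 + x0 + x1))%R.
Proof.
move=> x1_P0 x1_b0 x0_b1; split; [|split] => E.
- by apply: x1_P0; rewrite E addrC addKr.
- apply: x1_b0; rewrite addrAC in E.
  by rewrite (addIr _ E) [(b01 + _)%R]addrC addrK.
- by apply: x0_b1; rewrite (addIr _ E) [(b01 + _)%R]addrC addrK.
Qed.

Theorem lemma1p3
  (G : porderZmodType) (HG : ordered_abelian_group G)
  (beta0 beta1 beta01 : G)
  (d0 : Order.disp_t) (I0 : orderType d0) (HI0 : limit_ordinal_type I0)
  (d1 : Order.disp_t) (I1 : orderType d1) (HI1 : limit_ordinal_type I1)
  (gamma0 : I0 -> G) (gamma1 : I1 -> G)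
  (Hg0pos : forall j : I0, (0 <= gamma0 j)%R)
  (Hg1pos : forall j : I1, (0 <= gamma1 j)%R)
  (Hg0inc : forall j k : I0, (j < k)%O -> (gamma0 j < gamma0 k)%R)
  (Hg1inc : forall j k : I1, (j < k)%O -> (gamma1 j < gamma1 k)%R) :
  let P0 := fun j0 : I0 => (beta0 + gamma0 j0)%R in
  let P1 := fun j1 : I1 => (beta1 + gamma1 j1)%R in
  let P01 := fun (j0 : I0) (j1 : I1) => (beta01 + gamma0 j0 + gamma1 j1)%R in
  (exists (rho0 : I0) (rho1 : I1) (A : I0 -> Prop) (sigma : I0 -> I1),
      (forall j0, A j0 -> pos_index j0) /\
      (forall j0, A j0 -> pos_index (sigma j0)) /\
      (forall (j0 : I0) (j1 : I1), (rho0 < j0)%O -> (rho1 < j1)%O ->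
         (A j0 -> j1 <> sigma j0) ->
         pairwise_distinct3 (P0 j0) (P1 j1) (P01 j0 j1)))
  /\
  (forall (nu0 : I0) (nu1 : I1), exists (j0 : I0) (j1 : I1),
      (nu0 < j0)%O /\ (nu1 < j1)%O /\
      pairwise_distinct3 (P0 j0) (P1 j1) (P01 j0 j1)).
Proof.
move=> P0 P1 P01.
have [_ [inh0 no_max0]] := HI0; have [_ [inh1 no_max1]] := HI1.
have [h0 gamma0K] := inj_left_inverse gamma0 inh0 (inc_inj (le_mono Hg0inc)).
have [h1 gamma1K] := inj_left_inverse gamma1 inh1 (inc_inj (le_mono Hg1inc)).
pose rho0 := h0 (beta1 - beta01)%R; pose rho1 := h1 (beta0 - beta01)%R.
pose sigma j0 := h1 (P0 j0 - beta1)%R.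
have distinct j0 j1 : (rho0 < j0)%O -> (rho1 < j1)%O -> j1 <> sigma j0 ->
    pairwise_distinct3 (P0 j0) (P1 j1) (P01 j0 j1).
  move=> rho0_j0 rho1_j1 j1_sigma; apply: distinct3_addr.
  - by move=> E; apply: j1_sigma; rewrite /sigma -E gamma1K.
  - exact: can_gt_neq gamma1K rho1_j1.
  - exact: can_gt_neq gamma0K rho0_j0.
split.
  exists rho0, rho1, (fun j0 => (rho0 < j0)%O /\ (rho1 < sigma j0)%O), sigma.
  split; first by move=> j0 [rho0_j0 _]; exists rho0.
  split; first by move=> j0 [_ rho1_sigma]; exists rho1.
  move=> j0 j1 rho0_j0 rho1_j1 j1_sigma; apply: distinct => // E.
  by apply: j1_sigma; rewrite -E.
move=> nu0 nu1.
have [j0] := no_max0 (Order.max nu0 rho0).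
rewrite gt_max => /andP[nu0_j0 rho0_j0].
have [j1 []] := exists_gt_neq (Order.max nu1 rho1) (sigma j0) no_max1.
rewrite gt_max => /andP[nu1_j1 rho1_j1] j1_sigma.
by exists j0, j1; split; [|split; [|exact: distinct]].
Qed.
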